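(* For every tree $T$ of order $n \ge 3$, $$\operatorname{irr}(T) > n \operatorname{Var}(T).$$
   Context: For a graph $G=(V,E)$ of order $n$ and size $m$, $d(u)$ denotes the degree of a vertex $u$. The (Albertson) irregularity is $\operatorname{irr}(G)=\sum_{uv\in E}|d(u)-d(v)|$. The degree variance is $\operatorname{Var}(G)=\frac{1}{n}\sum_{u\in V}(d(u)-\overline d)^2$, where $\overline d = 2m/n$ is the average degree. *)

From mathcomp Require Import all_boot all_order all_algebra.
Set Implicit Arguments. Unset Strict Implicit. Unset Printing Implicit Defensive.
Import Order.TTheory GRing.Theory Num.Theory.
Local Open Scope ring_scope.

Definition simple_graph (T : finType) (e : rel T) : Prop :=
  symmetric e /\ irreflexive e.

Definition connected_graph (T : finType) (e : rel T) : Prop :=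
  forall x y : T, connect e x y.

(* A cycle: a duplicate-free closed walk with at least 3 vertices,
   c = [:: x0; ...; xk], edges x_i x_{i+1} and x_k x_0 (path.v's [cycle]). *)
Definition acyclic_graph (T : finType) (e : rel T) : Prop :=
  forall c : seq T, uniq c -> (2 < size c)%N -> ~~ cycle e c.

Definition is_tree (T : finType) (e : rel T) : Prop :=
  simple_graph e /\ connected_graph e /\ acyclic_graph e.

Definition deg (T : finType) (e : rel T) (u : T) : nat := #|[pred v | e u v]|.

Definition gsize (R : realFieldType) (T : finType) (e : rel T) : R :=
  (#|[pred p : T * T | e p.1 p.2]|)%:R / 2.

(* irr(G) = sum over edges uv of |d(u)-d(v)|; each edge counted once
   (sum over ordered adjacent pairs, halved). *)
Definition irr (R : realFieldType) (T : finType) (e : rel T) : R :=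
  (\sum_(u : T) \sum_(v : T | e u v)
      `|(deg e u)%:R - (deg e v)%:R : R|) / 2.

Definition avg_deg (R : realFieldType) (T : finType) (e : rel T) : R :=
  2 * gsize R e / (#|T|)%:R.

Definition degvar (R : realFieldType) (T : finType) (e : rel T) : R :=
  (\sum_(u : T) ((deg e u)%:R - avg_deg R e) ^+ 2) / (#|T|)%:R.

(** Root the tree at a vertex [r] of degree at least 2 and orient every other
   vertex [u] towards its parent [p u].  Each edge is then [u -- p u] for exactly
   one [u <> r], so with [d] the degree and [m = n - 1],
     sum_u d(u)^2 = sum_(u <> r) (d(u) + d(p u)),
     irr(T)       = sum_(u <> r) |d(u) - d(p u)|,
     sum_u d(u)   = 2 m.
   Since [d(p u) <= d(u) + |d(u) - d(p u)|],
     sum_u d(u)^2 <= 2 (2 m - d(r)) + irr(T) <= 4 m - 4 + irr(T),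
   hence [n Var(T) = sum_u d(u)^2 - 4 m^2 / n <= irr(T) - 4 / n < irr(T)]. *)

From mathcomp Require Import all_boot all_order all_algebra.
From mathcomp Require Import ring lra zify.
Set Implicit Arguments. Unset Strict Implicit.
Import Order.TTheory GRing.Theory Num.Theory.
Local Open Scope ring_scope.

Lemma connect_descent (T : finType) (e : rel T) (r : T) :
  (forall x, connect e x r) ->
  exists p : T -> T, exists rk : T -> nat,
    (forall x, x != r -> e x (p x)) /\ (forall x, x != r -> (rk (p x) < rk x)%N).
Proof.
move=> econ.
pose reach x k := [exists s : k.-tuple T, path e x s && (last x s == r)].
have reachP x : exists k, reach x k.
  have /connectP [s ps ls] := econ x.
  by exists (size s); apply/existsP; exists (in_tuple s); rewrite ps -ls eqxx.
pose rk x := ex_minn (reachP x).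
have rk_min x k : reach x k -> (rk x <= k)%N.
  by rewrite /rk; case: ex_minnP => m _; apply.
have rk_reach x : reach x (rk x) by rewrite /rk; case: ex_minnP.
have descent x : x != r -> exists y, e x y && (rk y < rk x)%N.
  move=> xr; case/existsP: (rk_reach x) => -[s sz] /andP [pxs lxs].
  case: s sz pxs lxs => [|y s] /= /eqP sz pxs lxs; first by rewrite lxs in xr.
  case/andP: pxs => exy pys; exists y; rewrite exy -sz ltnS.
  by apply: rk_min; apply/existsP; exists (in_tuple s); rewrite pys lxs.
pose p x := odflt x [pick y | e x y && (rk y < rk x)%N].
have pP x : x != r -> e x (p x) && (rk (p x) < rk x)%N.
  move=> xr; rewrite /p; case: pickP => [y -> // | none].
  by have [y] := descent x xr; rewrite none.
by exists p, rk; split=> x /pP /andP [].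
Qed.

Lemma sum_deg (T : finType) (e : rel T) :
  (\sum_u deg e u = #|[pred q : T * T | e q.1 q.2]|)%N.
Proof.
rewrite -sum1_card (eq_bigl (fun q : T * T => e q.1 q.2)) //.
rewrite -(pair_big_dep predT (fun u v => e u v) (fun _ _ => 1%N)) /=.
by apply: eq_bigr => u _; rewrite /deg -sum1_card.
Qed.

Lemma avg_degE (R : realFieldType) (T : finType) (e : rel T) :
  avg_deg R e = (\sum_u (deg e u)%:R) / #|T|%:R.
Proof.
rewrite /avg_deg /gsize -natr_sum sum_deg mulrCA mulfV ?mulr1 //.
by rewrite pnatr_eq0.
Qed.

Lemma sum_sqr_dev_mean (R : realFieldType) (T : finType) (F : T -> R) :
  (0 < #|T|)%N ->
  \sum_u (F u - (\sum_v F v) / #|T|%:R) ^+ 2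
    = \sum_u F u ^+ 2 - (\sum_u F u) ^+ 2 / #|T|%:R.
Proof.
move=> T0; set S := \sum_v F v; set N := #|T|%:R.
have N0 : N != 0 by rewrite pnatr_eq0 -lt0n.
have sqrB x : (x - S / N) ^+ 2 = x ^+ 2 - (2 * S / N) * x + (S / N) ^+ 2 by ring.
under eq_bigr => u _ do rewrite sqrB.
rewrite !big_split /= sumrN -mulr_sumr sumr_const -/S -mulr_natr -/N.
by field.
Qed.

Lemma card_mul_degvar (R : realFieldType) (T : finType) (e : rel T) :
  (0 < #|T|)%N ->
  #|T|%:R * degvar R e
    = \sum_u (deg e u)%:R ^+ 2 - (\sum_u (deg e u)%:R) ^+ 2 / #|T|%:R :> R.
Proof.
move=> T0; rewrite /degvar avg_degE sum_sqr_dev_mean // mulrCA mulfV ?mulr1 //.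
by rewrite pnatr_eq0 -lt0n.
Qed.

Lemma exists_deg_gt1 (T : finType) (e : rel T) :
  (3 <= #|T|)%N -> (\sum_u deg e u = 2 * #|T|.-1)%N -> exists r, (1 < deg e r)%N.
Proof.
move=> n3 degsum; apply/existsP; apply: contraTT n3 => /existsPn deg_le1.
have : (\sum_u deg e u <= \sum_(u : T) 1)%N.
  by apply: leq_sum => u _; rewrite leqNgt deg_le1.
by rewrite degsum sum1_card -/#|T|; case: #|T| => [|[|[|n]]] //=; lia.
Qed.

Section RootedTree.

Variables (T : finType) (e : rel T) (r : T) (p : T -> T) (rk : T -> nat).
Hypothesis parent_edge : forall x, x != r -> e x (p x).
Hypothesis parent_rank : forall x, x != r -> (rk (p x) < rk x)%N.

Lemma parent_parent_neq u : u != r -> p u != r -> p (p u) != u.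
Proof.
move=> ur pur; apply/eqP => ppu.
by have := ltn_trans (parent_rank pur) (parent_rank ur); rewrite ppu ltnn.
Qed.

Lemma connect_root (e' : rel T) :
  (forall x, x != r -> e' x (p x)) -> forall x, connect e' x r.
Proof.
move=> e'p x; have [k] := ubnP (rk x); elim: k x => // k IH x.
rewrite ltnS => le_x; have [-> // | xr] := eqVneq x r.
apply: connect_trans (connect1 (e'p x xr)) (IH _ _).
exact: leq_trans (parent_rank xr) le_x.
Qed.

Hypotheses (sym_e : symmetric e) (irr_e : irreflexive e) (acyclic_e : acyclic_graph e).

Lemma tree_edgeE u v :
  e u v = ((u != r) && (v == p u)) || ((v != r) && (u == p v)).
Proof.
apply/idP/idP; last first.
  by case/orP => /andP [xr /eqP ->]; [|rewrite sym_e]; exact: parent_edge.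
move=> euv; apply/negPn/negP => not_parent.
pose e' a b := e a b && ~~ (((a == u) && (b == v)) || ((a == v) && (b == u))).
have e'sym : symmetric e'.
  move=> a b; rewrite /e' sym_e.
  by case: (a == u); case: (a == v); case: (b == u); case: (b == v).
have e'p x : x != r -> e' x (p x).
  move=> xr; rewrite /e' parent_edge //=; apply: contra not_parent.
  by case/orP => /andP [/eqP <- /eqP <-]; rewrite xr eqxx ?orbT.
(* Removing the edge [uv] leaves both ends connected to the root through parent
   edges; the resulting [v]-[u] path closes a cycle with [uv]. *)
have : connect e' v u.
  by rewrite (connect_trans (connect_root e'p v)) // (sym_connect_sym e'sym) connect_root.
case/connectP => s0 ps0; case: (shortenP ps0) => s ps us _ lsu.
case: s ps us lsu => [|w [|w' s]] ps us /= lsu.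
- by move: euv; rewrite lsu irr_e.
- by move: ps; rewrite /= -lsu /e' sym_e euv !eqxx orbT.
apply/negP: (acyclic_e us isT); rewrite negbK /cycle rcons_path.
apply/andP; split; last by rewrite /= -lsu.
by apply: sub_path ps => a b /andP [].
Qed.

Lemma sum_arcs_parent (V : nmodType) (F : T -> T -> V) :
  \sum_u \sum_(v | e u v) F u v = \sum_(u | u != r) (F u (p u) + F (p u) u).
Proof.
have split_arcs u : \sum_(v | e u v) F u v =
   (if u != r then F u (p u) else 0)
   + \sum_v (if (v != r) && (u == p v) then F u v else 0).
  rewrite (bigID (fun v => (u != r) && (v == p u))) /=; congr (_ + _).
    rewrite (eq_bigl (fun v => (u != r) && (v == p u))); last first.
      by move=> v; rewrite tree_edgeE andb_idl // => ->.
    by case: (u != r); [rewrite big_pred1_eq | rewrite big_pred0].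
  rewrite -big_mkcond; apply: eq_bigl => v; rewrite tree_edgeE.
  case: (boolP ((u != r) && (v == p u))) => [/andP [ur /eqP vp] | _]; last first.
    by rewrite andbT.
  apply/esym/negbTE/negP => /andP [vr /eqP up].
  by move: (parent_parent_neq ur); rewrite -vp vr -up eqxx => /(_ isT).
rewrite (eq_bigr _ (fun u _ => split_arcs u)) big_split /=.
rewrite exchange_big /= -big_mkcond big_split /=; congr (_ + _).
rewrite [RHS]big_mkcond; apply: eq_bigr => v _.
by case: (v != r) => /=; [rewrite -big_mkcond big_pred1_eq | rewrite big1].
Qed.

Lemma sum_deg_parent : (\sum_u deg e u = 2 * #|T|.-1)%N.
Proof.
rewrite (eq_bigr _ (fun u _ => esym (sum1_card _))) /=.
rewrite (sum_arcs_parent (fun _ _ => 1%N)) -(cardC1 r) -sum1_card big_distrr.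
by apply: eq_bigl => u; rewrite inE.
Qed.

Variable R : realFieldType.
Local Notation d u := ((deg e u)%:R : R).

Lemma sum_sqr_deg_parent : \sum_u d u ^+ 2 = \sum_(u | u != r) (d u + d (p u)).
Proof.
rewrite -(sum_arcs_parent (fun u _ => d u)); apply: eq_bigr => u _.
by rewrite expr2 /deg -sum1_card natr_sum mulr_sumr; apply: eq_bigr => v _; rewrite mulr1.
Qed.

Lemma irr_parent : irr R e = \sum_(u | u != r) `|d u - d (p u)|.
Proof.
rewrite /irr sum_arcs_parent.
under eq_bigr => u _ do rewrite [`|d (p u) - _|]distrC.
rewrite big_split /=; lra.
Qed.

Lemma card_mul_degvar_lt_irr : (1 < deg e r)%N -> #|T|%:R * degvar R e < irr R e.
Proof.
move=> deg_r; have T0 : (0 < #|T|)%N by apply/card_gt0P; exists r.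
have sumd : \sum_u d u = 2 * #|T|.-1%:R by rewrite -natr_sum sum_deg_parent natrM.
have sumd_root : \sum_u d u = d r + \sum_(u | u != r) d u by rewrite (bigD1 r).
have parent_le : \sum_(u | u != r) d (p u)
                   <= \sum_(u | u != r) (d u + `|d u - d (p u)|).
  apply: ler_sum => u _; have := ler_norm (d (p u) - d u); rewrite distrC; lra.
have d_r : 2 <= d r by rewrite (ler_nat R 2).
have nE : #|T|%:R = #|T|.-1%:R + 1 :> R by rewrite natr1 prednK.
have gap : 0 < 4 / #|T|%:R :> R by rewrite divr_gt0 // ltr0n.
have gapE : (2 * #|T|.-1%:R) ^+ 2 / #|T|%:R = 4 * #|T|.-1%:R - 4 + 4 / #|T|%:R :> R.
  by rewrite nE; field; rewrite -nE pnatr_eq0 -lt0n.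
rewrite card_mul_degvar // sumd gapE sum_sqr_deg_parent irr_parent.
rewrite !big_split /= in parent_le *.
lra.
Qed.

End RootedTree.



Theorem theorem1 (R : realFieldType) (T : finType) (e : rel T) :
  is_tree e -> (3 <= #|T|)%N ->
  (#|T|)%:R * degvar R e < irr R e.
Proof.
move=> [[sym_e irr_e] [econ acyclic_e]] n3.
have rooted (r : T) := connect_descent (fun x => econ x r).
have [r0 _] := card_gt0P (leq_trans (isT : (0 < 3)%N) n3).
have [p0 [rk0 [p0e p0rk]]] := rooted r0.
have [r deg_r] := exists_deg_gt1 n3 (sum_deg_parent p0e p0rk sym_e irr_e acyclic_e).
have [p [rk [pe prk]]] := rooted r.
exact: (card_mul_degvar_lt_irr pe prk sym_e irr_e acyclic_e R deg_r).
Qed.
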